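(* Let $p\in K$, let $M$ be a PPV-extension of $K$ for $\delta^2Y-p\,\delta Y=0$, let $\eta\in M$ with $\delta^2\eta=p\,\delta\eta$ and $\delta\eta\neq0$, and let $L:=K\langle\delta\eta\rangle_\Delta$. Then $\delta\eta$ is not $\partial$-transcendental over $K$; consequently $L$ is finitely generated as a field over $K$ (it has finite transcendence degree over $K$).
   Context: All fields have characteristic zero. $F$ is a differentially closed $\partial$-field (every system of polynomial differential equations over $F$ having a solution in some $\partial$-field extension has one in $F$). $K:=F(x)$ with commuting derivations $\delta,\partial$ given by $\delta x=1$, $\partial x=0$, $\delta|_F=0$; $K^\delta=F$. For a $\Delta$-field extension $M$ of $K$ ($\Delta=\{\delta,\partial\}$) and $y\in M$, $K\langle y\rangle_\Delta$ denotes the $\Delta$-subfield generated over $K$ by all iterated derivatives of $y$. $y$ is $\partial$-transcendental over $K$ if $y,\partial y,\partial^2 y,\dots$ are algebraically independent over $K$. A PPV-extension of $K$ for $\delta^2Y-p\delta Y=0$ is a $\Delta$-field extension $M\supseteq K$ containing two $K^\delta$-linearly independent solutions, generated as a $\Delta$-field over $K$ by them, and with $M^\delta=K^\delta$. *)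

From HB Require Import structures.
From mathcomp Require Import all_boot all_order all_algebra.
Set Implicit Arguments. Unset Strict Implicit. Unset Printing Implicit Defensive.
Import Order.TTheory GRing.Theory Num.Theory.
Local Open Scope ring_scope.

Definition is_derivation (R : nzRingType) (d : R -> R) : Prop :=
  (forall a b, d (a + b) = d a + d b) /\ (forall a b, d (a * b) = d a * b + a * d b).

Inductive gen_field (M : fieldType) (S : M -> Prop) : M -> Prop :=
| gf_base a : S a -> gen_field S a
| gf_one : gen_field S 1
| gf_add a b : gen_field S a -> gen_field S b -> gen_field S (a + b)
| gf_opp a : gen_field S a -> gen_field S (- a)
| gf_mul a b : gen_field S a -> gen_field S b -> gen_field S (a * b)
| gf_inv a : gen_field S a -> gen_field S (a^-1).

Inductive gen_dfield (M : fieldType) (d1 d2 : M -> M) (S : M -> Prop) : M -> Prop :=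
| gd_base a : S a -> gen_dfield d1 d2 S a
| gd_one : gen_dfield d1 d2 S 1
| gd_add a b : gen_dfield d1 d2 S a -> gen_dfield d1 d2 S b -> gen_dfield d1 d2 S (a + b)
| gd_opp a : gen_dfield d1 d2 S a -> gen_dfield d1 d2 S (- a)
| gd_mul a b : gen_dfield d1 d2 S a -> gen_dfield d1 d2 S b -> gen_dfield d1 d2 S (a * b)
| gd_inv a : gen_dfield d1 d2 S a -> gen_dfield d1 d2 S (a^-1)
| gd_d1 a : gen_dfield d1 d2 S a -> gen_dfield d1 d2 S (d1 a)
| gd_d2 a : gen_dfield d1 d2 S a -> gen_dfield d1 d2 S (d2 a).

(* Algebraic independence of the finite family v over the subfield K of M:
   every polynomial with coefficients in K, written as a list of
   (coefficient, exponent vector) pairs with pairwise distinct exponent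
   vectors, that vanishes at v has all coefficients zero. *)
Definition monomial (M : fieldType) (v : seq M) (e : seq nat) : M :=
  \prod_(j < size v) v`_j ^+ (nth 0%N e j).

Definition alg_indep (M : fieldType) (K : M -> Prop) (v : seq M) : Prop :=
  forall P : seq (M * seq nat),
    (forall m, m \in P -> K m.1 /\ size m.2 = size v) ->
    uniq (map snd P) ->
    \sum_(m <- P) m.1 * monomial v m.2 = 0 ->
    forall m, m \in P -> m.1 = 0.

Definition d_transcendental (M : fieldType) (d : M -> M) (K : M -> Prop) (u : M) : Prop :=
  forall n : nat, alg_indep K [seq iter k d u | k <- iota 0 n.+1].

Fixpoint map_term (R S : nzRingType) (f : R -> S) (t : GRing.term R) : GRing.term S :=
  match t with
  | GRing.Var i => GRing.Var _ i
  | GRing.Const c => GRing.Const (f c)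
  | GRing.NatConst n => GRing.NatConst _ n
  | GRing.Add t1 t2 => GRing.Add (map_term f t1) (map_term f t2)
  | GRing.Opp t1 => GRing.Opp (map_term f t1)
  | GRing.NatMul t1 n => GRing.NatMul (map_term f t1) n
  | GRing.Mul t1 t2 => GRing.Mul (map_term f t1) (map_term f t2)
  | GRing.Inv t1 => GRing.Inv (map_term f t1)
  | GRing.Exp t1 n => GRing.Exp (map_term f t1) n
  end.

(* Differential environment: for n unknowns ys and order bound r, the
   variable 'X_k (k < n*(r+1)) stands for d^(k %/ n) (ys_(k %% n)). *)
Definition denv (R : nzRingType) (d : R -> R) (n r : nat) (ys : seq R) : seq R :=
  [seq iter (k %/ n) d (nth 0 ys (k %% n)) | k <- iota 0 (n * r.+1)].

Definition diff_closed (F : fieldType) (dF : F -> F) : Prop :=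
  forall (n r : nat) (S : seq (GRing.term F)),
    all (@GRing.rterm F) S ->
    (exists (E : fieldType) (dE : E -> E) (f : {rmorphism F -> E}) (ys : seq E),
        [/\ is_derivation dE, (forall a, dE (f a) = f (dF a)), size ys = n &
            all (fun t => GRing.eval (denv dE n r ys) (map_term f t) == 0) S]) ->
    exists ys : seq F, size ys = n /\
      all (fun t => GRing.eval (denv dF n r ys) t == 0) S.

From HB Require Import structures.
From mathcomp Require Import all_boot all_order all_algebra separable.
From mathcomp.algebra_tactics Require Import ring.
From mathcomp Require Import zify.
From Stdlib Require Import Classical ClassicalEpsilon.
Set Implicit Arguments. Unset Strict Implicit. Unset Printing Implicit Defensive.
Import GRing.Theory.
Local Open Scope ring_scope.

(* For w := partial u / u we have delta w = partial p.  Write p = a/b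
   with a, b \in F[x] and choose a separable Q \in F[x] with b | Q^m.  Every
   partial^k p is of the form A/Q^j, and Hermite reduction shows that it is
   congruent, modulo derivatives delta g (g \in K), to some r_k/Q with
   deg r_k < deg Q.  Hence deg Q + 1 of them are F-linearly dependent modulo
   delta K: sum_k c_k partial^(k+1) p = delta g.  Then E := sum_k c_k
   partial^k w has delta (E - g) = 0, so E \in K.  Multiplying by u^(n+1)
   turns E \in K into a polynomial relation
       c_n u^n partial^(n+1) u + B(u, ..., partial^n u) = 0,   c_n != 0,
   over K, which contradicts partial-transcendence of u and expresses
   partial^(n+1) u rationally in the lower derivatives. *)

Section Derivation.
Variables (M : fieldType) (d : M -> M).
Hypothesis hd : is_derivation d.

Lemma dD a b : d (a + b) = d a + d b. Proof. exact: hd.1. Qed.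
Lemma dM a b : d (a * b) = d a * b + a * d b. Proof. exact: hd.2. Qed.

Lemma d0 : d 0 = 0.
Proof. by apply: (@addrI _ (d 0)); rewrite -dD !addr0. Qed.

Lemma dN a : d (- a) = - d a.
Proof. by apply: (@addrI _ (d a)); rewrite -dD !subrr d0. Qed.

Lemma dB a b : d (a - b) = d a - d b. Proof. by rewrite dD dN. Qed.

Lemma d1 : d 1 = 0.
Proof.
have H11 := dM 1 1; rewrite !mul1r mulr1 in H11.
by apply: (@addrI _ (d 1)); rewrite addr0 -H11.
Qed.

Lemma dnat n : d n%:R = 0.
Proof. by elim: n => [|n IH]; rewrite ?d0 // -addn1 natrD dD IH d1 addr0. Qed.

Lemma dX a n : d (a ^+ n.+1) = n.+1%:R * a ^+ n * d a.
Proof.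
elim: n => [|n IH]; first by rewrite expr1 expr0 mulr1 mul1r.
by rewrite exprS dM IH exprS -[n.+2]addn1 natrD; ring.
Qed.

Lemma dV a : d (a^-1) = - d a * (a^-1 * a^-1).
Proof.
have [->|a0] := eqVneq a 0; first by rewrite invr0 d0 !mulr0.
have Haa := dM a a^-1; rewrite divff // d1 in Haa.
have -> : d a^-1 = a^-1 * (a * d a^-1) by rewrite mulrA mulVf // mul1r.
have -> : a * d a^-1 = - (d a * a^-1) by apply/eqP; rewrite -addr_eq0 addrC -Haa.
by field.
Qed.

Lemma dnatV n : d (n%:R^-1) = 0.
Proof. by rewrite dV dnat oppr0 mul0r. Qed.

Lemma dsum (I : Type) (r : seq I) (P : pred I) (f : I -> M) :
  d (\sum_(i <- r | P i) f i) = \sum_(i <- r | P i) d (f i).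
Proof. by apply: (big_morph d dD d0). Qed.

Lemma dquot (A B : M) n :
  B != 0 -> d (A / B ^+ n.+1) = (d A * B - n.+1%:R * A * d B) / B ^+ n.+2.
Proof.
move=> B0; rewrite dM dV dX.
have Bn : B ^+ n != 0 by rewrite expf_neq0.
by rewrite !exprS; move: (B ^+ n) Bn => C C0; field; rewrite ?C0 ?B0.
Qed.
End Derivation.

Lemma diter (M : fieldType) (d1 d2 : M -> M) (comm : forall a, d1 (d2 a) = d2 (d1 a)) k a :
  d1 (iter k d2 a) = iter k d2 (d1 a).
Proof. by elim: k => [|k IH] //=; rewrite comm IH. Qed.

Section GeneratedField.
Variable M : fieldType.
Implicit Types (S : M -> Prop) (a b : M).

Lemma gf0 S : gen_field S 0.
Proof. by rewrite -(subrr (1 : M)); apply: gf_add; [|apply: gf_opp]; apply: gf_one. Qed.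

Lemma gf_natr S n : gen_field S n%:R.
Proof.
elim: n => [|n IH]; first exact: gf0.
by rewrite -addn1 natrD; apply: gf_add => //; apply: gf_one.
Qed.

Lemma gf_div S a b : gen_field S a -> gen_field S b -> gen_field S (a / b).
Proof. by move=> ha hb; apply: gf_mul => //; apply: gf_inv. Qed.

Lemma gf_exp S a n : gen_field S a -> gen_field S (a ^+ n).
Proof.
move=> ha; elim: n => [|n IH]; first exact: gf_one.
by rewrite exprS; apply: gf_mul.
Qed.

Lemma gf_d (d : M -> M) (hd : is_derivation d) S :
  (forall a, S a -> gen_field S (d a)) -> forall a, gen_field S a -> gen_field S (d a).
Proof.
move=> HS a; elim=> {a}.
- exact: HS.
- by rewrite d1 //; apply: gf0.
- by move=> a b _ ha _ hb; rewrite dD //; apply: gf_add.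
- by move=> a _ ha; rewrite dN //; apply: gf_opp.
- by move=> a b Ga ha Gb hb; rewrite dM //; apply: gf_add; apply: gf_mul.
- move=> a Ga ha; rewrite dV //; apply: gf_mul; first exact: gf_opp.
  by apply: gf_mul; apply: gf_inv.
Qed.

Inductive polyin (K S : M -> Prop) : M -> Prop :=
| pk a : K a -> polyin K S a
| pv a : S a -> polyin K S a
| padd a b : polyin K S a -> polyin K S b -> polyin K S (a + b)
| pmul a b : polyin K S a -> polyin K S b -> polyin K S (a * b).

Lemma polyin_mono (K S T : M -> Prop) :
  (forall a, S a -> T a) -> forall a, polyin K S a -> polyin K T a.
Proof. by move=> ST a; elim=> *; [apply: pk | apply: pv; apply: ST | apply: padd | apply: pmul]. Qed.

Lemma polyin_sum (K S : M -> Prop) (I : Type) (r : seq I) (P : pred I) (f : I -> M) :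
  K 0 -> (forall i, P i -> polyin K S (f i)) -> polyin K S (\sum_(i <- r | P i) f i).
Proof. by move=> K0 H; apply: big_ind => //; [apply: pk | apply: padd]. Qed.

Lemma polyin_exp (K S : M -> Prop) a n : K 1 -> polyin K S a -> polyin K S (a ^+ n).
Proof.
move=> K1 ha; elim: n => [|n IH]; first exact: pk.
by rewrite exprS; apply: pmul.
Qed.

Lemma polyin_d (d : M -> M) (hd : is_derivation d) (K S T : M -> Prop) :
  (forall a, K a -> K (d a)) -> (forall a, S a -> polyin K T (d a)) ->
  (forall a, S a -> T a) -> forall a, polyin K S a -> polyin K T (d a).
Proof.
move=> Kd Sd ST a; elim=> {a}.
- by move=> a Ka; apply: pk; apply: Kd.
- exact: Sd.
- by move=> a b _ ha _ hb; rewrite dD //; apply: padd.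
- move=> a b Ga ha Gb hb; rewrite dM //.
  by apply: padd; apply: pmul => //; apply: (polyin_mono ST).
Qed.

Lemma polyin_gf (K S T : M -> Prop) :
  (forall a, K a -> gen_field T a) -> (forall a, S a -> gen_field T a) ->
  forall a, polyin K S a -> gen_field T a.
Proof. by move=> HK HS a; elim=> *; [apply: HK | apply: HS | apply: gf_add | apply: gf_mul]. Qed.
End GeneratedField.

Section Monomials.
Variable M : fieldType.
Implicit Types (v : seq M) (e : seq nat).

Lemma monomialE v e : monomial v e = \prod_(0 <= j < size v) v`_j ^+ (nth 0%N e j).
Proof. by rewrite /monomial big_mkord. Qed.

Lemma monomial_rcons v t e j : size e = size v ->
  monomial (rcons v t) (rcons e j) = monomial v e * t ^+ j.
Proof.
move=> se; rewrite !monomialE size_rcons big_nat_recr //= nth_rcons ltnn eqxx.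
rewrite nth_rcons se ltnn eqxx; congr (_ * _).
by apply: eq_big_nat => i /andP[_ hi]; rewrite !nth_rcons hi se hi.
Qed.

Lemma monomial0 v : monomial v (nseq (size v) 0%N) = 1.
Proof.
rewrite monomialE; apply: big1_seq => i; rewrite mem_iota => /andP[_ hi].
by rewrite nth_nseq; case: ifP.
Qed.

Lemma monomial_head (a : M) v k : monomial (a :: v) (k :: nseq (size v) 0%N) = a ^+ k.
Proof.
rewrite monomialE /= big_nat_recl //= big1_seq ?mulr1 // => i.
by rewrite mem_iota => /andP[_ /andP[_ hi]]; rewrite nth_nseq; case: ifP.
Qed.

Lemma monomial_var v j : (j < size v)%N ->
  monomial v [seq nat_of_bool (i == j) | i <- iota 0 (size v)] = v`_j.
Proof.
move=> hj; rewrite monomialE (big_cat_nat _ (n := j)) //= ?(ltnW hj) //.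
rewrite [X in _ * X]big_ltn // (nth_map 0%N) ?size_iota // nth_iota // add0n eqxx expr1.
rewrite big1_seq ?mul1r; last first.
  move=> i; rewrite mem_iota add0n subn0 => /andP[_ /andP[_ hi]].
  rewrite (nth_map 0%N) ?size_iota ?(ltn_trans hi hj) // nth_iota ?(ltn_trans hi hj) //.
  by rewrite add0n (ltn_eqF hi) expr0.
rewrite big1_seq ?mulr1 // => i; rewrite mem_iota => /andP[_ /andP[hi1 hi2]].
rewrite subnKC in hi2; last exact: hj.
by rewrite (nth_map 0%N) ?size_iota // nth_iota // add0n (gtn_eqF hi1) expr0.
Qed.

Lemma monomial_add v e1 e2 :
  monomial v [seq (nth 0 e1 i + nth 0 e2 i)%N | i <- iota 0 (size v)] =
  monomial v e1 * monomial v e2.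
Proof.
rewrite !monomialE -big_split /=; apply: eq_big_nat => i /andP[_ hi].
by rewrite (nth_map 0%N) ?size_iota // nth_iota // add0n exprD.
Qed.

Lemma polyin_expand (K S : M -> Prop) v :
  K 1 -> (forall a b, K a -> K b -> K (a * b)) -> (forall s, S s -> s \in v) ->
  forall z, polyin K S z -> exists P : seq (M * seq nat),
    (forall m, m \in P -> K m.1 /\ size m.2 = size v) /\
    z = \sum_(m <- P) m.1 * monomial v m.2.
Proof.
move=> K1 KM Sv z; elim=> {z}.
- move=> a Ka; exists [:: (a, nseq (size v) 0%N)]; split.
    by move=> m; rewrite inE => /eqP -> /=; rewrite size_nseq.
  by rewrite big_seq1 /= monomial0 mulr1.
- move=> a /Sv av.
  exists [:: (1, [seq nat_of_bool (i == index a v) | i <- iota 0 (size v)])]; split.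
    by move=> m; rewrite inE => /eqP -> /=; rewrite size_map size_iota.
  by rewrite big_seq1 /= monomial_var ?index_mem // nth_index // mul1r.
- move=> a b _ [P1 [h1 ->]] _ [P2 [h2 ->]]; exists (P1 ++ P2); split; last by rewrite big_cat.
  by move=> m; rewrite mem_cat => /orP[/h1|/h2].
- move=> a b _ [P1 [h1 ->]] _ [P2 [h2 ->]].
  exists [seq (m1.1 * m2.1, [seq (nth 0 m1.2 i + nth 0 m2.2 i)%N | i <- iota 0 (size v)])
         | m1 <- P1, m2 <- P2]; split.
    move=> m /allpairsP [[m1 m2] [/= hm1 hm2 ->]] /=; split.
      by apply: KM; [exact: (h1 _ hm1).1 | exact: (h2 _ hm2).1].
    by rewrite size_map size_iota.
  rewrite big_allpairs_dep /= mulr_suml; apply: eq_bigr => m1 _.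
  by rewrite mulr_sumr; apply: eq_bigr => m2 _; rewrite monomial_add; ring.
Qed.

Lemma big_pred1_uniq (T : eqType) (r : seq T) x (f : T -> M) :
  uniq r -> x \in r -> \sum_(j <- r | j == x) f j = f x.
Proof.
move=> ur xr; rewrite (big_rem x) //= eqxx big_hasC ?addr0 //.
apply/hasPn => j jr; apply/negP => /eqP ejx.
by move: jr; rewrite ejx mem_rem_uniqF.
Qed.

(* Algebraic independence also applies to lists with repeated exponent
   vectors: merging equal monomials, each total coefficient vanishes. *)
Lemma alg_indep_coef (K : M -> Prop) v :
  K 0 -> (forall a b, K a -> K b -> K (a + b)) -> alg_indep K v ->
  forall P : seq (M * seq nat), (forall m, m \in P -> K m.1 /\ size m.2 = size v) ->
  \sum_(m <- P) m.1 * monomial v m.2 = 0 ->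
  forall e, \sum_(m <- P | m.2 == e) m.1 = 0.
Proof.
move=> K0 KD ind P hP s0 e.
set E := undup (map snd P).
set P' := [seq (\sum_(m <- P | m.2 == f) m.1, f) | f <- E].
have hP' : forall m, m \in P' -> K m.1 /\ size m.2 = size v.
  move=> m /mapP [f fE ->] /=; split.
    rewrite big_seq_cond; apply: big_ind => // m' /andP[m'P _]; exact: (hP m' m'P).1.
  by move: fE; rewrite mem_undup => /mapP [m' m'P ->]; exact: (hP m' m'P).2.
have uP' : uniq (map snd P') by rewrite -map_comp /= map_id_in ?undup_uniq.
have sP' : \sum_(m <- P') m.1 * monomial v m.2 = 0.
  rewrite big_map /= -[in RHS]s0.
  transitivity (\sum_(f <- E) \sum_(m <- P | m.2 == f) m.1 * monomial v m.2).
    by apply: eq_bigr => f _; rewrite mulr_suml; apply: eq_bigr => m /eqP ->.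
  rewrite (exchange_big_dep xpredT) //=; apply: eq_big_seq => m mP.
  under eq_bigl do rewrite eq_sym.
  by rewrite big_pred1_uniq ?undup_uniq // mem_undup; apply/mapP; exists m.
have [eE|neE] := boolP (e \in E).
  by apply: (ind P' hP' uP' sP' (\sum_(m <- P | m.2 == e) m.1, e)); apply/mapP; exists e.
rewrite big_hasC //; apply/hasPn => m mP; apply/negP => /eqP me.
by move: neE; rewrite mem_undup -me; apply/negP/negPn/mapP; exists m.
Qed.
End Monomials.

Section Char0Poly.
Variable F : fieldType.
Hypothesis charF : [pchar F] =i pred0.
Implicit Types P b c : {poly F}.

Lemma deriv_neq0 P : (1 < size P)%N -> P^`() != 0.
Proof.
move=> sP; apply/negP => /eqP h; have := congr1 (fun q : {poly F} => q`_(size P).-2) h.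
rewrite coef_deriv coef0 -mulr_natr => /eqP; rewrite mulf_eq0; apply/negP; rewrite negb_or.
have -> : (size P).-2.+1 = (size P).-1 by case: (size P) sP => [|[|n]].
rewrite -/(lead_coef P) lead_coef_eq0 -size_poly_gt0 (ltn_trans _ sP) //=.
by move: charF => /pcharf0P ->; case: (size P) sP => [|[|n]].
Qed.

Lemma irreducible_separable P : irreducible_poly P -> separable_poly P.
Proof.
move=> irr; rewrite unlock irreducible_poly_coprime //.
have nz' := deriv_neq0 irr.1.
by apply: contraL (lt_size_deriv (irredp_neq0 irr)) => /(dvdp_leq nz'); rewrite leqNgt.
Qed.

Lemma irreducible_factor b : (1 < size b)%N -> exists P, irreducible_poly P /\ P %| b.
Proof.
elim: {b}(size b) {-2}b (leqnn (size b)) => [|n IH] b hb sb.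
  by move: sb; rewrite leqNgt (leq_ltn_trans hb).
have [irr|nirr] := classic (irreducible_poly b); first by exists b.
have [q [q1 [qb nqb]]] : exists q : {poly F}, size q != 1%N /\ q %| b /\ ~~ (q %= b).
  apply: NNPP => H; apply: nirr; split => // q q1 qb.
  by apply/negPn/negP => nq; apply: H; exists q.
have b0 : b != 0 by rewrite -size_poly_gt0 (ltn_trans _ sb).
have q0 : q != 0 by apply: contraNneq b0 => q0; move: qb; rewrite q0 dvd0p.
have sq : (1 < size q)%N by move: q1 q0; rewrite -size_poly_gt0; case: (size q) => [|[|]].
have sqb : (size q < size b)%N by rewrite ltn_neqAle dvdp_leq // andbT dvdp_size_eqp.
have [P [irrP Pq]] := IH q (leq_trans sqb hb) sq.
by exists P; split => //; apply: dvdp_trans Pq qb.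
Qed.

Lemma split_factor P b : (1 < size P)%N -> b != 0 ->
  exists j c, b = P ^+ j * c /\ ~~ (P %| c).
Proof.
move=> sP; elim: {b}(size b) {-2}b (leqnn (size b)) => [|n IH] b hb b0.
  by move: hb; rewrite leqn0 size_poly_eq0 (negPf b0).
have [Pb|nPb] := boolP (P %| b); last by exists 0%N, b; rewrite expr0 mul1r.
have P0 : P != 0 by rewrite -size_poly_gt0 (ltn_trans _ sP).
have bE := divpK Pb; set b1 := b %/ P in bE *.
have b10 : b1 != 0 by apply: contraNneq b0 => h; rewrite -bE h mul0r.
have : (size b1 <= n)%N.
  move: hb; rewrite -bE size_mul //.
  by move: sP; rewrite -subn1; move: (size b1) (size P) => s t; lia.
move=> /IH /(_ b10) [j [c [Ej nc]]].
by exists j.+1, c; split => //; rewrite -bE Ej exprS; ring.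
Qed.

Lemma separable_radical b : b != 0 ->
  exists Q, [/\ separable_poly Q, Q %| b & exists m, b %| Q ^+ m].
Proof.
elim: {b}(size b) {-2}b (leqnn (size b)) => [|n IH] b hb b0.
  by move: hb; rewrite leqn0 size_poly_eq0 (negPf b0).
have [sb|sb] := leqP (size b) 1.
  exists 1; split; rewrite ?dvd1p //; first by rewrite unlock /separable_poly coprime1p.
  by exists 0%N; rewrite expr0 dvdp1 eqn_leq sb size_poly_gt0.
have [P [irrP Pb]] := irreducible_factor sb.
have sP := irrP.1; have P0 := irredp_neq0 irrP.
have [j [c [Eb nPc]]] := split_factor sP b0.
have c0 : c != 0 by apply: contraNneq b0 => h; rewrite Eb h mulr0.
have j0 : j != 0%N by apply: contraNneq nPc => j0; move: Pb; rewrite Eb j0 expr0 mul1r.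
have : (size c <= n)%N.
  move: hb; rewrite Eb size_mul ?expf_neq0 //.
  have : (1 < size (P ^+ j))%N.
    case: j j0 {Eb} => // j _; rewrite exprS size_mul ?expf_neq0 //.
    have : (0 < size (P ^+ j))%N by rewrite size_poly_gt0 expf_neq0.
    by move: sP; rewrite -!subn1; move: (size P) (size (P ^+ j)) => s t; lia.
  by rewrite -!subn1; move: (size c) (size (P ^+ j)) => s t; lia.
move=> /IH /(_ c0) [Qc [sepQc Qcc [m cm]]].
have PQc : coprimep P Qc.
  by apply: coprimep_dvdl Qcc _; rewrite irreducible_poly_coprime.
exists (P * Qc); split.
- by rewrite separable_mul irreducible_separable ?sepQc.
- by rewrite Eb; apply: dvdp_mul => //; case: j j0 {Eb} => // j _; rewrite exprS dvdp_mulr.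
- exists (maxn j m); rewrite Eb exprMn; apply: dvdp_mul.
    by apply: dvdp_exp2l; rewrite leq_maxl.
  by apply: (dvdp_trans cm); apply: dvdp_exp2l; rewrite leq_maxr.
Qed.

Lemma poly_lindep (d : nat) (r : nat -> {poly F}) : (forall k, size (r k) <= d)%N ->
  exists c : nat -> F, (exists k, (k < d.+1)%N /\ c k != 0) /\
    \sum_(k < d.+1) c k *: r k = 0.
Proof.
move=> sr; pose A : 'M[F]_(d.+1, d) := \matrix_(k < d.+1, i < d) (r k)`_i.
have : kermx A != 0.
  by rewrite kermx_eq0 /row_free neq_ltn (leq_ltn_trans (rank_leq_col A)).
case/rowV0Pn=> w /sub_kermxP wA /rV0Pn [k wk].
exists (fun k => if (k < d.+1)%N then w 0 (inord k) else 0); split.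
  by exists k; rewrite ltn_ord inord_val.
apply/polyP => i; rewrite coef0 coef_sum.
under eq_bigr do rewrite ltn_ord inord_val coefZ.
have [id|di] := ltnP i d.
  have := congr1 (fun N : 'M[F]_(1, d) => N 0 (Ordinal id)) wA; rewrite !mxE => wA0.
  rewrite -[RHS]wA0.
  by apply: eq_bigr => k' _; rewrite /A !mxE.
by apply: big1 => k' _; rewrite nth_default ?mulr0 // (leq_trans (sr k')).
Qed.
End Char0Poly.

Section RationalFunctions.
Variables (F : fieldType) (dF : F -> F) (M : fieldType) (dl pt : M -> M).
Hypothesis charM : [pchar M] =i pred0.
Hypotheses (derdl : is_derivation dl) (derpt : is_derivation pt).
Variable iota : {rmorphism F -> M}.
Hypotheses (dl_F : forall c, dl (iota c) = 0) (pt_F : forall c, pt (iota c) = iota (dF c)).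
Variable x : M.
Hypotheses (dl_x : dl x = 1) (pt_x : pt x = 0).
Hypothesis x_transc : forall q : {poly F}, q != 0 -> (map_poly iota q).[x] != 0.

Definition Kfield := gen_field (fun w : M => (exists c, w = iota c) \/ w = x).
Definition evx (q : {poly F}) := (map_poly iota q).[x].

Lemma evD a b : evx (a + b) = evx a + evx b. Proof. by rewrite /evx rmorphD hornerD. Qed.
Lemma evM a b : evx (a * b) = evx a * evx b. Proof. by rewrite /evx rmorphM hornerM. Qed.
Lemma evN a : evx (- a) = - evx a. Proof. by rewrite /evx rmorphN hornerN. Qed.
Lemma evB a b : evx (a - b) = evx a - evx b. Proof. by rewrite evD evN. Qed.
Lemma evC c : evx c%:P = iota c. Proof. by rewrite /evx map_polyC hornerC. Qed.
Lemma ev1 : evx 1 = 1. Proof. by rewrite -polyC1 evC rmorph1. Qed.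
Lemma ev0 : evx 0 = 0. Proof. by rewrite -polyC0 evC rmorph0. Qed.
Lemma evZ c a : evx (c *: a) = iota c * evx a. Proof. by rewrite -mul_polyC evM evC. Qed.
Lemma evX n a : evx (a ^+ n) = evx a ^+ n. Proof. by rewrite /evx rmorphXn horner_exp. Qed.
Lemma evMn n a : evx (a *+ n) = evx a *+ n. Proof. by rewrite /evx rmorphMn hornerMn. Qed.
Lemma evMXC a c : evx (a * 'X + c%:P) = evx a * x + iota c.
Proof. by rewrite /evx rmorphD rmorphM /= map_polyX map_polyC hornerMXaddC. Qed.
Lemma ev_sum (I : Type) (r : seq I) (P : pred I) (f : I -> {poly F}) :
  evx (\sum_(i <- r | P i) f i) = \sum_(i <- r | P i) evx (f i).
Proof. exact: (big_morph evx evD ev0). Qed.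

Lemma ev_neq0 q : q != 0 -> evx q != 0. Proof. exact: x_transc. Qed.

Lemma K_iota c : Kfield (iota c). Proof. by apply: gf_base; left; exists c. Qed.
Lemma K_x : Kfield x. Proof. by apply: gf_base; right. Qed.

Lemma K_ev q : Kfield (evx q).
Proof.
elim/poly_ind: q => [|q c IH]; first by rewrite ev0; apply: gf0.
by rewrite evMXC; apply: gf_add; [apply: gf_mul => //; apply: K_x | apply: K_iota].
Qed.

Lemma K_dl a : Kfield a -> Kfield (dl a).
Proof.
apply: gf_d => // z [[c ->]|->]; first by rewrite dl_F; apply: gf0.
by rewrite dl_x; apply: gf_one.
Qed.

Lemma K_pt a : Kfield a -> Kfield (pt a).
Proof.
apply: gf_d => // z [[c ->]|->]; first by rewrite pt_F; apply: K_iota.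
by rewrite pt_x; apply: gf0.
Qed.

Lemma dl_ev q : dl (evx q) = evx q^`().
Proof.
elim/poly_ind: q => [|q c IH]; first by rewrite ev0 deriv0 ev0 (d0 derdl).
rewrite derivMXaddC evMXC (dD derdl) (dM derdl) dl_F dl_x IH evD evM.
by rewrite /evx map_polyX hornerX; ring.
Qed.

Lemma pt_ev q : exists q', pt (evx q) = evx q'.
Proof.
elim/poly_ind: q => [|q c [q' IH]]; first by exists 0; rewrite ev0 (d0 derpt).
by exists (q' * 'X + (dF c)%:P); rewrite !evMXC (dD derpt) (dM derpt) pt_F pt_x IH; ring.
Qed.

Lemma K_frac z : Kfield z -> exists a b, b != 0 /\ z = evx a / evx b.
Proof.
elim=> {z}.
- move=> z [[c ->]|->]; first by exists c%:P, 1; rewrite oner_neq0 evC ev1 divr1.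
  by exists 'X, 1; rewrite oner_neq0 ev1 divr1 /evx map_polyX hornerX.
- by exists 1, 1; rewrite oner_neq0 ev1 divr1.
- move=> _ _ _ [a [b [b0 ->]]] _ [a' [b' [b0' ->]]].
  exists (a * b' + a' * b), (b * b'); rewrite mulf_neq0 //; split => //.
  rewrite evD !evM; have := ev_neq0 b0; have := ev_neq0 b0'.
  by move: (evx b) (evx b') => B B' hB hB'; field; rewrite hB hB'.
- by move=> _ _ [a [b [b0 ->]]]; exists (- a), b; rewrite evN mulNr.
- move=> _ _ _ [a [b [b0 ->]]] _ [a' [b' [b0' ->]]].
  by exists (a * a'), (b * b'); rewrite mulf_neq0 // !evM invfM; split => //; ring.
- move=> _ _ [a [b [b0 ->]]].
  have [->|a0] := eqVneq a 0; first by exists 0, 1; rewrite oner_neq0 ev0 !mul0r invr0.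
  by exists b, a; split => //; rewrite invfM invrK mulrC.
Qed.

Definition dexact (z : M) := exists g, Kfield g /\ z = dl g.

Lemma dexact_dl g : Kfield g -> dexact (dl g). Proof. by exists g. Qed.

Lemma dexactD a b : dexact a -> dexact b -> dexact (a + b).
Proof.
move=> [g [Kg ->]] [h [Kh ->]]; exists (g + h).
by rewrite (dD derdl); split => //; apply: gf_add.
Qed.

Lemma dexactN a : dexact a -> dexact (- a).
Proof. by move=> [g [Kg ->]]; exists (- g); rewrite (dN derdl); split => //; apply: gf_opp. Qed.

Lemma dexactZ c a : dexact a -> dexact (iota c * a).
Proof.
move=> [g [Kg ->]]; exists (iota c * g); rewrite (dM derdl) dl_F mul0r add0r.
by split => //; apply: gf_mul => //; apply: K_iota.
Qed.

Lemma dexact_sum (I : Type) (r : seq I) (P : pred I) (f : I -> M) :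
  (forall i, P i -> dexact (f i)) -> dexact (\sum_(i <- r | P i) f i).
Proof.
move=> H; apply: big_ind => //; last exact: dexactD.
by rewrite -(d0 derdl); apply: dexact_dl; apply: gf0.
Qed.

Lemma natS_neq0 n : (n.+1%:R : M) != 0.
Proof. by move: charM => /pcharf0P ->. Qed.

(* Polynomials in x are delta-exact (they have antiderivatives in F[x]). *)
Lemma dexact_ev a : dexact (evx a).
Proof.
rewrite /evx horner_coef size_map_poly; apply: dexact_sum => i _; rewrite coef_map /=.
have -> : iota a`_i * x ^+ i = iota a`_i * dl (x ^+ i.+1 * i.+1%:R^-1).
  rewrite (dM derdl) (dX derdl) dl_x (dnatV derdl) mulr0 addr0 mulr1.
  by have := natS_neq0 i; move: (i.+1%:R : M) => k k0; field.
apply: dexactZ; apply: dexact_dl; apply: gf_mul; first by apply: gf_exp; apply: K_x.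
by apply: gf_inv; apply: gf_natr.
Qed.

Section Hermite.
Variable Q : {poly F}.
Hypothesis sepQ : separable_poly Q.

Let Q0 : Q != 0 := separable_poly_neq0 sepQ.
Let EQ0 : evx Q != 0 := ev_neq0 Q0.

(* One step of Hermite reduction: write a = s Q + t Q' (Bezout) and
   integrate t Q' / Q^(m+2) by parts, lowering the power of Q. *)
Lemma hermite_step m a : exists a',
  dexact (evx a / evx Q ^+ m.+2 - evx a' / evx Q ^+ m.+1).
Proof.
have cQ : coprimep Q Q^`() by move: sepQ; rewrite unlock.
have [[s t] /= Est] := Bezout_eq1_coprimepP _ _ cQ.
set T := a * t; exists (a * s + (m.+1%:R^-1 : F) *: T^`()).
set g := evx T / evx Q ^+ m.+1.
have Kg : Kfield g by apply: gf_div; [apply: K_ev | apply: gf_exp; apply: K_ev].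
have dg := dquot derdl (evx T) m EQ0; rewrite -/g !dl_ev in dg.
have ea : evx a = evx (a * s) * evx Q + evx T * evx Q^`().
  by rewrite -!evM -evD /T; congr evx; rewrite -[a in LHS]mulr1 -Est; ring.
rewrite evD evZ fmorphV rmorph_nat.
have -> : evx a / evx Q ^+ m.+2 -
    (evx (a * s) + m.+1%:R^-1 * evx T^`()) / evx Q ^+ m.+1 = m.+1%:R^-1 * (- dl g).
  rewrite dg ea; have := natS_neq0 m; move: (m.+1%:R : M) => k k0.
  rewrite !exprS; move: (evx Q ^+ m) (expf_neq0 m EQ0) => C C0.
  by field; rewrite ?k0 ?C0 ?EQ0.
have -> : (m.+1%:R^-1 : M) = iota (m.+1%:R^-1) by rewrite fmorphV rmorph_nat.
by apply: dexactZ; apply: dexactN; apply: dexact_dl.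
Qed.

Lemma hermite m a : exists r : {poly F},
  (size r < size Q)%N /\ dexact (evx a / evx Q ^+ m - evx r / evx Q).
Proof.
have split_diff (A B C : M) : A - C = (A - B) + (B - C) by rewrite addrA subrK.
elim: m a => [|[|m] IH] a.
- exists 0; rewrite size_poly0 size_poly_gt0; split => //.
  by rewrite expr0 divr1 ev0 mul0r subr0; apply: dexact_ev.
- exists (a %% Q); rewrite ltn_modp; split => //.
  rewrite {1}(divp_eq a Q) evD evM expr1.
  have -> : (evx (a %/ Q) * evx Q + evx (a %% Q)) / evx Q - evx (a %% Q) / evx Q =
      evx (a %/ Q) by field.
  exact: dexact_ev.
- have [a' step] := hermite_step m a; have [r [sr er]] := IH a'.
  by exists r; split => //; rewrite (split_diff _ (evx a' / evx Q ^+ m.+1)); apply: dexactD.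
Qed.
End Hermite.
End RationalFunctions.

Section PartialRelation.
Variables (F : fieldType) (dF : F -> F).
Hypothesis charF : [pchar F] =i pred0.
Variables (M : fieldType) (dl pt : M -> M).
Hypothesis charM : [pchar M] =i pred0.
Hypotheses (derdl : is_derivation dl) (derpt : is_derivation pt).
Hypothesis comm : forall a, dl (pt a) = pt (dl a).
Variable iota : {rmorphism F -> M}.
Hypotheses (dl_F : forall c, dl (iota c) = 0) (pt_F : forall c, pt (iota c) = iota (dF c)).
Variable x : M.
Hypotheses (dl_x : dl x = 1) (pt_x : pt x = 0).
Hypothesis x_transc : forall q : {poly F}, q != 0 -> (map_poly iota q).[x] != 0.
Hypothesis consts : forall m : M, dl m = 0 -> exists c, m = iota c.
Variable p : M.
Hypothesis p_in_K : Kfield iota x p.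
Variable u : M.
Hypotheses (u0 : u != 0) (du : dl u = p * u).

Local Notation K := (Kfield iota x).
Local Notation evx := (evx iota x).
Local Notation dexact := (dexact dl iota x).

Lemma pt_iter_frac (Q : {poly F}) a0 m0 : Q != 0 -> p = evx a0 / evx Q ^+ m0 ->
  forall k, exists a j, iter k pt p = evx a / evx Q ^+ j.
Proof.
move=> Q0 hp; elim=> [|k [a [[|j] IH]]]; first by exists a0, m0.
- have [a' ha'] := pt_ev derpt pt_F pt_x a.
  by exists a', 0%N; rewrite iterS IH !expr0 !divr1.
- have [a' ha'] := pt_ev derpt pt_F pt_x a; have [Q1 hQ1] := pt_ev derpt pt_F pt_x Q.
  rewrite iterS IH (dquot derpt _ _ (ev_neq0 x_transc Q0)) ha' hQ1.
  exists (a' * Q - (a * Q1) *+ j.+1), j.+2.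
  by rewrite evB evMn !evM -mulr_natl; ring.
Qed.

(* Finitely many partial derivatives of p are F-linearly dependent modulo
   delta-exact elements (Hermite reduction plus linear algebra). *)
Lemma pt_p_dependent : exists N (c : nat -> F), (exists k, (k < N)%N /\ c k != 0) /\
  dexact (\sum_(k < N) iota (c k) * iter k.+1 pt p).
Proof.
have [a0 [b0 [b00 hp]]] := K_frac x_transc p_in_K.
have [Q [sepQ _ [m0 bQ]]] := separable_radical charF b00.
have Q0 := separable_poly_neq0 sepQ.
set h := Q ^+ m0 %/ b0.
have hp' : p = evx (a0 * h) / evx Q ^+ m0.
  have hb : h * b0 = Q ^+ m0 by rewrite divpK.
  have h0 : h != 0 by apply/eqP => h0; move: (expf_neq0 m0 Q0); rewrite -hb h0 mul0r eqxx.
  rewrite hp -evX -hb !evM; have := ev_neq0 x_transc b00; have := ev_neq0 x_transc h0.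
  by move: (evx h) (evx b0) => H B H0 B0; field; rewrite H0 B0.
have red k : exists r : {poly F}, (size r < size Q)%N /\
    dexact (iter k.+1 pt p - evx r / evx Q).
  have [a [j ->]] := pt_iter_frac Q0 hp' k.+1.
  exact: (hermite charM derdl dl_F dl_x x_transc sepQ).
pose rf k := proj1_sig (constructive_indefinite_description _ (red k)).
have hrf k : (size (rf k) < size Q)%N /\ dexact (iter k.+1 pt p - evx (rf k) / evx Q).
  exact: proj2_sig (constructive_indefinite_description _ (red k)).
have [c [nzc sc]] := poly_lindep (fun k => ltnW (hrf k).1).
exists (size Q).+1, c; split => //.
have -> : \sum_(k < (size Q).+1) iota (c k) * iter k.+1 pt p =
    \sum_(k < (size Q).+1) iota (c k) * (iter k.+1 pt p - evx (rf k) / evx Q) +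
    evx (\sum_(k < (size Q).+1) c k *: rf k) / evx Q.
  by rewrite ev_sum mulr_suml -big_split /=; apply: eq_bigr => i _; rewrite evZ; ring.
rewrite sc ev0 mul0r addr0; apply: (dexact_sum derdl) => i _.
exact: (dexactZ derdl dl_F) (hrf i).2.
Qed.

Lemma truncate_combination N (c : nat -> F) (f : nat -> M) :
  (exists k, (k < N)%N /\ c k != 0) -> K (\sum_(k < N) iota (c k) * f k) ->
  exists n, c n != 0 /\ K (\sum_(k < n.+1) iota (c k) * f k).
Proof.
elim: N => [|N IH] [k [hk ck]] KS //.
have [cN|cN] := eqVneq (c N) 0; last by exists N.
apply: IH; last by move: KS; rewrite big_ord_recr /= cN rmorph0 mul0r addr0.
exists k; split => //; move: hk; rewrite ltnS leq_eqVlt => /orP[/eqP ek|//].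
by move: ck; rewrite ek cN eqxx.
Qed.

Lemma dl_log_pt : dl (pt u / u) = pt p.
Proof.
rewrite (dM derdl) (dV derdl) comm du (dM derpt).
by move: (pt u) (pt p) => a b; field.
Qed.

Lemma log_pt_combination : exists n (c : nat -> F), c n != 0 /\
  K (\sum_(k < n.+1) iota (c k) * iter k pt (pt u / u)).
Proof.
have [N [c [nz [g [Kg Eg]]]]] := pt_p_dependent.
set E := \sum_(k < N) iota (c k) * iter k pt (pt u / u).
have dE : dl E = \sum_(k < N) iota (c k) * iter k.+1 pt p.
  rewrite /E (dsum derdl); apply: eq_bigr => k _.
  by rewrite (dM derdl) dl_F mul0r add0r (diter comm) dl_log_pt iterSr.
have [c0 hc0] : exists c0, E - g = iota c0 by apply: consts; rewrite (dB derdl) dE Eg subrr.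
have KE : K E.
  by rewrite -(subrK g E) hc0 addrC; apply: gf_add => //; apply: K_iota.
have [n [cn Kn]] := truncate_combination nz KE.
by exists n, c.
Qed.

Local Notation derivs k := (fun z => exists j, (j <= k)%N /\ z = iter j pt u).
Local Notation polyK k := (polyin K (derivs k)).

Lemma polyK_mono k l a : (k <= l)%N -> polyK k a -> polyK l a.
Proof.
move=> kl; apply: polyin_mono => z [j [hj ->]]; exists j; split => //.
exact: leq_trans kl.
Qed.

Lemma polyK_iter j k : (j <= k)%N -> polyK k (iter j pt u).
Proof. by move=> hj; apply: pv; exists j. Qed.

Lemma polyK_pt k z : polyK k z -> polyK k.+1 (pt z).
Proof.
apply: (polyin_d derpt); first exact: (K_pt derpt pt_F pt_x).
  by move=> a [j [hj ->]]; apply: pv; exists j.+1.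
by move=> a [j [hj ->]]; exists j; split => //; apply: leqW.
Qed.

Lemma polyK_upow k n : polyK k (u ^+ n).
Proof. by apply: polyin_exp; [apply: gf_one | apply: (polyK_iter (leq0n k))]. Qed.

Lemma clear_denominator k :
  polyK k (u ^+ k.+1 * iter k pt (pt u / u) - u ^+ k * iter k.+1 pt u).
Proof.
elim: k => [|k IH].
  by rewrite expr1 expr0 mul1r /= mulrC divfK // subrr; apply: pk; apply: gf0.
set D := u ^+ k.+1 * iter k pt (pt u / u) - u ^+ k * iter k.+1 pt u in IH.
have -> : u ^+ k.+2 * iter k.+1 pt (pt u / u) - u ^+ k.+1 * iter k.+2 pt u =
    u * pt D + u * pt (u ^+ k) * iter k.+1 pt u +
    (- k.+1%:R) * pt u * (D + u ^+ k * iter k.+1 pt u).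
  rewrite /D (dB derpt) !(dM derpt) (dX derpt) /=.
  move: (pt (u ^+ k)) (iter k pt (pt u / u)) (iter k pt u) => P W T.
  by rewrite !exprS; ring.
have Kk1 := polyK_iter (leqnn k.+1).
have Kk := polyK_mono (leqnSn k).
apply: padd; first apply: padd.
- by apply: pmul; [apply: (polyK_upow _ 1) | apply: polyK_pt].
- by apply: pmul => //; apply: pmul; [apply: (polyK_upow _ 1) | apply: polyK_pt; apply: polyK_upow].
- apply: pmul; first apply: pmul.
  + by apply: pk; apply: gf_opp; apply: gf_natr.
  + exact: (polyK_iter (j := 1)).
  + by apply: padd; [apply: Kk | apply: pmul => //; apply: polyK_upow].
Qed.

Lemma pt_relation : exists n (c : nat -> F) B, c n != 0 /\ polyK n B /\
  iota (c n) * u ^+ n * iter n.+1 pt u + B = 0.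
Proof.
have [n [c [cn KE]]] := log_pt_combination.
set E := \sum_(k < n.+1) iota (c k) * iter k pt (pt u / u) in KE.
pose D k := u ^+ k.+1 * iter k pt (pt u / u) - u ^+ k * iter k.+1 pt u.
have expand : \sum_(k < n.+1) iota (c k) * u ^+ (n - k) * D k =
    u ^+ n.+1 * E - \sum_(k < n.+1) iota (c k) * u ^+ n * iter k.+1 pt u.
  rewrite /E mulr_sumr -sumrB; apply: eq_bigr => k _.
  have hk : (k <= n)%N by rewrite -ltnS ltn_ord.
  have -> : u ^+ n.+1 = u ^+ (n - k) * u ^+ k.+1 by rewrite -exprD addnS subnK.
  have -> : u ^+ n = u ^+ (n - k) * u ^+ k by rewrite -exprD subnK.
  by rewrite /D; ring.
exists n, c, (\sum_(k < n.+1) iota (c k) * u ^+ (n - k) * D k +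
  \sum_(k < n) iota (c k) * u ^+ n * iter k.+1 pt u - u ^+ n.+1 * E).
split => //; split; last by rewrite expand big_ord_recr /=; ring.
have K0 : K 0 by apply: gf0.
apply: padd; first apply: padd.
- apply: polyin_sum => // k _; apply: pmul; first apply: pmul.
  + by apply: pk; apply: K_iota.
  + exact: polyK_upow.
  + by apply: (polyK_mono (k := k)); [rewrite -ltnS ltn_ord | apply: clear_denominator].
- apply: polyin_sum => // k _; apply: pmul; first apply: pmul.
  + by apply: pk; apply: K_iota.
  + exact: polyK_upow.
  + exact: polyK_iter (ltn_ord k).
- rewrite -mulN1r; apply: pmul; first by apply: pk; apply: gf_opp; apply: gf_one.
  by apply: pmul; [apply: polyK_upow | apply: pk].
Qed.

Section Consequences.
Variables (n : nat) (c : nat -> F) (B : M).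
Hypotheses (cn : c n != 0) (PB : polyK n B)
  (rel : iota (c n) * u ^+ n * iter n.+1 pt u + B = 0).

Definition lower_derivs : seq M := [seq iter k pt u | k <- seq.iota 0 n.+1].

Lemma mem_lower_derivs j : (j <= n)%N -> iter j pt u \in lower_derivs.
Proof. by move=> hj; apply/mapP; exists j; rewrite // mem_iota add0n ltnS hj. Qed.

(* The relation is a nontrivial algebraic dependence among u, ..., partial^(n+1) u:
   the monomial u^n partial^(n+1) u occurs only in the leading term. *)
Lemma relation_not_indep : ~ alg_indep K (rcons lower_derivs (iter n.+1 pt u)).
Proof.
move=> ind; have rel' := rel; set v0 := lower_derivs in ind.
set t := iter n.+1 pt u in rel' ind.
have sv0 : size v0 = n.+1 by rewrite size_map size_iota.
have Sv s : derivs n s -> s \in v0 by move=> [j [hj ->]]; apply: mem_lower_derivs.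
have [P [hP EB]] := polyin_expand (gf_one _) (fun a b => @gf_mul _ _ a b) Sv PB.
have v0E : v0 = u :: behead v0 by [].
clearbody v0 t.
set e := rcons (n :: nseq n 0%N) 1%N.
set PP := (iota (c n), e) :: [seq (m.1, rcons m.2 0%N) | m <- P].
have hPP m : m \in PP -> K m.1 /\ size m.2 = size (rcons v0 t).
  rewrite inE => /orP[/eqP -> | /mapP [m' m'P ->]] /=.
    by split; [apply: K_iota | rewrite /e !size_rcons /= size_nseq sv0].
  by have [Km' sm'] := hP m' m'P; split => //; rewrite !size_rcons sm'.
have sPP : \sum_(m <- PP) m.1 * monomial (rcons v0 t) m.2 = 0.
  rewrite big_cons big_map /= /e monomial_rcons; last by rewrite /= size_nseq sv0.
  have -> : n :: nseq n 0%N = n :: nseq (size (behead v0)) 0%N by rewrite size_behead sv0.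
  rewrite [in monomial v0 _]v0E monomial_head expr1 -[RHS]rel' mulrA; congr (_ + _).
  rewrite EB; apply: eq_big_seq => m mP.
  by rewrite monomial_rcons ?expr0 ?mulr1 //; apply: (hP m mP).2.
have := alg_indep_coef (gf0 _) (fun a b => @gf_add _ _ a b) ind hPP sPP e.
rewrite big_cons eqxx big_map /= big1 ?addr0; last first.
  by move=> m; rewrite /e eqseq_rcons andbF.
by move/eqP; rewrite fmorph_eq0 (negPf cn).
Qed.

Local Notation Kn := (gen_field (fun z => K z \/ z \in lower_derivs)).

Lemma Kn_K a : K a -> Kn a. Proof. by move=> Ka; apply: gf_base; left. Qed.

Lemma Kn_iter j : (j <= n)%N -> Kn (iter j pt u).
Proof. by move=> hj; apply: gf_base; right; apply: mem_lower_derivs. Qed.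

(* Solving the relation for the top derivative. *)
Lemma Kn_next : Kn (iter n.+1 pt u).
Proof.
have ic : iota (c n) != 0 by rewrite fmorph_eq0.
have un : u ^+ n != 0 by rewrite expf_neq0.
have -> : iter n.+1 pt u = - B / (iota (c n) * u ^+ n).
  move: rel; move: (iota (c n)) (u ^+ n) (iter n.+1 pt u) ic un => a b T a0 b0 rel'.
  have -> : B = - (a * b * T) by apply/eqP; rewrite -addr_eq0 addrC rel'.
  by field; rewrite a0 b0.
apply: gf_div; first apply: gf_opp.
  by apply: (polyin_gf Kn_K _ PB) => z [j [hj ->]]; apply: Kn_iter.
by apply: gf_mul; [apply: Kn_K; apply: K_iota | apply: gf_exp; apply: (Kn_iter (leq0n n))].
Qed.

Lemma Kn_pt a : Kn a -> Kn (pt a).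
Proof.
apply: (gf_d derpt) => z [Kz | /mapP [j hj ->]].
  by apply: Kn_K; apply: (K_pt derpt pt_F pt_x).
move: hj; rewrite mem_iota add0n ltnS => /andP[_]; rewrite leq_eqVlt => /orP[/eqP -> | hj].
  exact: Kn_next.
exact: (Kn_iter hj).
Qed.

Lemma Kn_dl a : Kn a -> Kn (dl a).
Proof.
apply: (gf_d derdl) => z [Kz | /mapP [j hj ->]].
  by apply: Kn_K; apply: (K_dl derdl dl_F dl_x).
rewrite (diter comm) du; elim: j {hj} => [|j IH] /=; last exact: Kn_pt.
by apply: gf_mul; [apply: Kn_K | apply: (Kn_iter (leq0n n))].
Qed.

Lemma Kn_generated m : gen_dfield dl pt (fun z => K z \/ z = u) m <-> Kn m.
Proof.
split; elim=> {m}.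
- by move=> z [Kz| ->]; [apply: Kn_K | apply: (Kn_iter (leq0n n))].
- exact: gf_one.
- by move=> a b _ ha _ hb; apply: gf_add.
- by move=> a _ ha; apply: gf_opp.
- by move=> a b _ ha _ hb; apply: gf_mul.
- by move=> a _ ha; apply: gf_inv.
- by move=> a _ ha; apply: Kn_dl.
- by move=> a _ ha; apply: Kn_pt.
- move=> z [Kz | /mapP [j _ ->]]; first by apply: gd_base; left.
  by elim: j => [|j IH] /=; [apply: gd_base; right | apply: gd_d2].
- exact: gd_one.
- by move=> a b _ ha _ hb; apply: gd_add.
- by move=> a _ ha; apply: gd_opp.
- by move=> a b _ ha _ hb; apply: gd_mul.
- by move=> a _ ha; apply: gd_inv.
Qed.
End Consequences.

Lemma u_not_pt_transcendental : ~ d_transcendental pt K u.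
Proof.
move=> dtr; have [n [c [B [cn [PB rel]]]]] := pt_relation.
apply: (relation_not_indep cn PB rel).
by have := dtr n.+1; rewrite -addn1 seq.iotaD map_cat cats1.
Qed.

Lemma u_finitely_generated : exists s : seq M, forall m,
  gen_dfield dl pt (fun z => K z \/ z = u) m <-> gen_field (fun z => K z \/ z \in s) m.
Proof.
have [n [c [B [cn [PB rel]]]]] := pt_relation.
by exists (lower_derivs n); apply: Kn_generated cn PB rel.
Qed.
End PartialRelation.

(* Lemma 3.1.  Only the following features of the PPV-extension M are used:
   the derivations commute, the delta-constants of M are F, and
   u := delta eta is a nonzero solution of delta u = p u. *)
Theorem lemma3p1
  (F : fieldType) (dF : F -> F)
  (charF : [pchar F] =i pred0) (derF : is_derivation dF) (dcF : diff_closed dF)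
  (M : fieldType) (dl pt : M -> M)
  (charM : [pchar M] =i pred0)
  (derdl : is_derivation dl) (derpt : is_derivation pt)
  (comm : forall a, dl (pt a) = pt (dl a))
  (iota : {rmorphism F -> M})
  (dl_F : forall c, dl (iota c) = 0) (pt_F : forall c, pt (iota c) = iota (dF c))
  (x : M) (dl_x : dl x = 1) (pt_x : pt x = 0)
  (x_transc : forall q : {poly F}, q != 0 -> (map_poly iota q).[x] != 0)
  (p : M) (p_in_K : gen_field (fun z => (exists c, z = iota c) \/ z = x) p)
  (* M is a PPV-extension of K for delta^2 Y - p delta Y = 0 *)
  (y1 y2 : M)
  (sol1 : dl (dl y1) - p * dl y1 = 0) (sol2 : dl (dl y2) - p * dl y2 = 0)
  (lin_indep : forall c1 c2 : F, iota c1 * y1 + iota c2 * y2 = 0 -> c1 = 0 /\ c2 = 0)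
  (gen : forall m : M,
      gen_dfield dl pt
        (fun z => gen_field (fun w => (exists c, w = iota c) \/ w = x) z
                  \/ z = y1 \/ z = y2) m)
  (consts : forall m : M, dl m = 0 -> exists c, m = iota c)
  (eta : M) (eta_sol : dl (dl eta) = p * dl eta) (eta_nc : dl eta != 0) :
  let K := gen_field (fun w => (exists c, w = iota c) \/ w = x) in
  let L := gen_dfield dl pt (fun z => K z \/ z = dl eta) in
  ~ d_transcendental pt K (dl eta) /\
  (exists s : seq M, forall m, L m <-> gen_field (fun z => K z \/ z \in s) m).
Proof.
move=> K L; split.
  exact: (u_not_pt_transcendental charF charM derdl derpt comm dl_F pt_F dl_x pt_x
            x_transc consts p_in_K eta_nc eta_sol).
exact: (u_finitely_generated charF charM derdl derpt comm dl_F pt_F dl_x pt_x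
          x_transc consts p_in_K eta_nc eta_sol).
Qed.
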